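(* Let $N\ge 2$, let $T_N$ be the homogeneous tree in which every vertex has degree $N$, and fix a root $o$. Let $m>1$ and $(p,q)\in G_1=\{(p,q): p\ge0,\ m-1-p<q<m\}$. Then for every $\epsilon>0$ there exists a weight $\mu$ on $T_N$ such that $$W_o(n)\asymp n^{\frac{mp+q}{p+q-m+1}}(\ln n)^{\frac{m-1}{p+q-m+1}+\epsilon}\quad\text{for } n\ge 2,$$ and the inequality $\Delta_m u+u^p|\nabla u|^q\le 0$ on $T_N$ admits a nontrivial positive solution.
   Context: A weight on a graph $(V,E)$ is a symmetric function $\mu:V\times V\to[0,\infty)$ with $\mu_{xy}=\mu_{yx}>0$ if and only if $x\sim y$ (adjacent); $\mu(x)=\sum_{y\sim x}\mu_{xy}$. For $m>1$, $\Delta_m u(x)=\frac{1}{\mu(x)}\sum_{y\sim x}\mu_{xy}|u(y)-u(x)|^{m-2}(u(y)-u(x))$ and $|\nabla u(x)|=\big(\sum_{y\sim x}\frac{\mu_{xy}}{2\mu(x)}(u(y)-u(x))^2\big)^{1/2}$. $d$ is the graph distance, $B(o,n)=\{x: d(o,x)\le n\}$, $W_o(n)=\sum_{x\in B(o,n),\,y\in V,\,d(o,x)<d(o,y)}\mu_{xy}$. $f(n)\asymp g(n)$ for $n\ge2$ means there are constants $c,C>0$ with $c\,g(n)\le f(n)\le C\,g(n)$ for all $n\ge 2$. A nontrivial positive solution is a non-constant $u:V\to(0,\infty)$ with $\Delta_m u(x)+u(x)^p|\nabla u(x)|^q\le0$ for all $x\in V$. *)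

From Stdlib Require Import Reals Lra List Arith.
Import ListNotations.
Open Scope R_scope.

(* Vertices are reduced words: a list [a_k; ...; a_1] (most recent letter first)
   with a_1 < N and a_j < N-1 for j >= 2.  The children of x are i :: x,
   with i < N if x is the root and i < N-1 otherwise; the parent of i :: x is x.
   Thus the root has degree N and every other vertex has degree N. *)
Fixpoint validb (N : nat) (s : list nat) : bool :=
  match s with
  | [] => true
  | [a] => Nat.ltb a N
  | a :: ((_ :: _) as t) => Nat.ltb a (N - 1) && validb N t
  end.

Definition vertex (N : nat) (x : list nat) : Prop := validb N x = true.

Definition root : list nat := [].

Definition nchild (N : nat) (x : list nat) : nat :=
  match x with [] => N | _ => (N - 1)%nat end.

Definition children (N : nat) (x : list nat) : list (list nat) :=
  map (fun i => i :: x) (seq 0 (nchild N x)).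

Definition nbrs (N : nat) (x : list nat) : list (list nat) :=
  match x with
  | [] => children N x
  | _ :: t => t :: children N x
  end.

Definition adj (N : nat) (x y : list nat) : Prop :=
  vertex N x /\ vertex N y /\
  ((exists i, y = i :: x) \/ (exists i, x = i :: y)).

Definition dist_o (x : list nat) : nat := length x.

Fixpoint words (N k : nat) : list (list nat) :=
  match k with
  | O => [[]]
  | S k' => flat_map (fun w => map (fun i => i :: w) (seq 0 N)) (words N k')
  end.

(* the ball B(o,n) (each vertex listed exactly once) *)
Definition ball (N n : nat) : list (list nat) :=
  flat_map (fun k => filter (validb N) (words N k)) (seq 0 (S n)).

Definition lsum {A : Type} (f : A -> R) (l : list A) : R :=
  fold_right (fun a acc => f a + acc) 0 l.

Definition is_weight (N : nat) (mu : list nat -> list nat -> R) : Prop :=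
  forall x y, vertex N x -> vertex N y ->
    mu x y = mu y x /\ 0 <= mu x y /\ (0 < mu x y <-> adj N x y).

Definition muv (N : nat) (mu : list nat -> list nat -> R) (x : list nat) : R :=
  lsum (fun y => mu x y) (nbrs N x).

(* W_o(n) = sum_{x in B(o,n), y in V, d(o,x) < d(o,y)} mu_xy;
   only neighbours y of x contribute since mu_xy = 0 otherwise. *)
Definition W (N : nat) (mu : list nat -> list nat -> R) (n : nat) : R :=
  lsum (fun x => lsum (fun y => if Nat.ltb (dist_o x) (dist_o y) then mu x y else 0)
                      (nbrs N x))
       (ball N n).

Definition phim (m t : R) : R :=
  if Req_EM_T t 0 then 0 else Rpower (Rabs t) (m - 2) * t.

Definition mlap (N : nat) (mu : list nat -> list nat -> R) (m : R)
    (u : list nat -> R) (x : list nat) : R :=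
  / muv N mu x * lsum (fun y => mu x y * phim m (u y - u x)) (nbrs N x).

Definition gradn (N : nat) (mu : list nat -> list nat -> R)
    (u : list nat -> R) (x : list nat) : R :=
  sqrt (lsum (fun y => mu x y / (2 * muv N mu x) * (u y - u x) ^ 2) (nbrs N x)).

(* g^q for g >= 0, with 0^0 = 1 and 0^q = 0 for q > 0
   (for q < 0 and g = 0 the value is +oo, handled in supersol_at) *)
Definition gpow (g q : R) : R :=
  if Req_EM_T g 0 then (if Req_EM_T q 0 then 1 else 0) else Rpower g q.

(* Delta_m u(x) + u(x)^p |grad u(x)|^q <= 0 at x (u(x) > 0 assumed);
   if |grad u(x)| = 0 and q < 0 the left side is +oo, so the inequality fails. *)
Definition supersol_at (N : nat) (mu : list nat -> list nat -> R) (m p q : R)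
    (u : list nat -> R) (x : list nat) : Prop :=
  (gradn N mu u x = 0 -> 0 <= q) /\
  mlap N mu m u x + Rpower (u x) p * gpow (gradn N mu u x) q <= 0.

Definition nontrivial_pos_solution (N : nat) (mu : list nat -> list nat -> R)
    (m p q : R) (u : list nat -> R) : Prop :=
  (forall x, vertex N x -> 0 < u x) /\
  (exists x y, vertex N x /\ vertex N y /\ u x <> u y) /\
  (forall x, vertex N x -> supersol_at N mu m p q u x).

Definition asymp (f g : nat -> R) : Prop :=
  exists c C, 0 < c /\ 0 < C /\
    forall n : nat, (2 <= n)%nat -> c * g n <= f n /\ f n <= C * g n.

From Stdlib Require Import Reals Lra Lia List Arith Bool.
Import ListNotations.
Open Scope R_scope.

(* Both the weight and the solution are radial.  Put x_k = k + 3, let the profile be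
   g_k = x_k^-a (ln x_k)^-b with a = (m - q) / (p + q - m + 1) and b = 1 / (p + q - m + 1), and give
   the edges between levels k and k + 1 the total weight w_k for which the flux
   w_k (g_k - g_(k+1))^(m-1) equals (ln x_k)^eps.  For u = lam g and x of level k + 1, up to the
   common factor N (N-1)^k, mu(x) Delta_m u(x) is -lam^(m-1) times the flux increment, of order
   x_k^-1 (ln x_k)^(eps-1), while the choice of a and b makes mu(x) u^p |grad u|^q of the same
   order times lam^(p+q); as p + q > m - 1, a small lam yields a supersolution.  Finally
   g_k - g_(k+1) ~ x_k^(-a-1) (ln x_k)^-b gives w_k ~ k^((a+1)(m-1)) (ln k)^(eps+b(m-1)), whose
   partial sums grow like the claimed W_o(n). *)

(** * Powers of logarithms *)

Lemma ln_le x y : 0 < x -> x <= y -> ln x <= ln y.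
Proof.
  intros Hx Hxy; destruct (Rle_lt_or_eq_dec _ _ Hxy) as [Hlt | ->].
  - left; apply ln_increasing; lra.
  - lra.
Qed.

Lemma exp_le x y : x <= y -> exp x <= exp y.
Proof.
  intros Hxy; destruct (Rle_lt_or_eq_dec _ _ Hxy) as [Hlt | ->].
  - left; apply exp_increasing; lra.
  - lra.
Qed.

Lemma Rpower_pos x y : 0 < Rpower x y.
Proof. apply exp_pos. Qed.

Lemma ln_gt_0 x : 1 < x -> 0 < ln x.
Proof. intros Hx; rewrite <- ln_1; apply ln_increasing; lra. Qed.

Lemma ln_ge_1 x : 3 <= x -> 1 <= ln x.
Proof.
  intros Hx; rewrite <- (ln_exp 1).
  apply ln_le; [apply exp_pos |]; pose proof exp_le_3; lra.
Qed.

Lemma ln_le_mul_ln x y c k : 1 < x -> 0 < y -> y <= x ^ k -> INR k <= c -> ln y <= c * ln x.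
Proof.
  intros Hx Hy Hyx Hk; pose proof (ln_gt_0 x Hx).
  apply Rle_trans with (INR k * ln x); [|nra].
  rewrite <- ln_pow by lra; apply ln_le; lra.
Qed.

Lemma Rpower_le_ratio a b k t : 0 < a -> 0 < b -> a <= k * b -> b <= k * a ->
  Rpower a t <= Rpower k (Rabs t) * Rpower b t.
Proof.
  intros Ha Hb Hab Hba.
  assert (Hk : 0 < k) by nra.
  assert (L1 : ln a <= ln k + ln b) by (rewrite <- ln_mult by lra; apply ln_le; lra).
  assert (L2 : ln b <= ln k + ln a) by (rewrite <- ln_mult by lra; apply ln_le; lra).
  unfold Rpower; rewrite <- exp_plus; apply exp_le.
  destruct (Rle_or_lt 0 t); [rewrite Rabs_right | rewrite Rabs_left]; nra.
Qed.

Lemma Rpower_le_endpoints x a b q : 0 < a -> a <= x <= b ->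
  Rpower x q <= Rpower a q + Rpower b q.
Proof.
  intros Ha Hx; unfold Rpower.
  assert (ln a <= ln x <= ln b) by (split; apply ln_le; lra).
  pose proof (exp_pos (q * ln a)); pose proof (exp_pos (q * ln b)).
  destruct (Rle_or_lt 0 q).
  - assert (exp (q * ln x) <= exp (q * ln b)) by (apply exp_le; nra); lra.
  - assert (exp (q * ln x) <= exp (q * ln a)) by (apply exp_le; nra); lra.
Qed.

Lemma Rdiv_Rpower_le J J' d d' r : 0 <= r -> 0 <= J <= J' -> 0 < d' <= d ->
  J / Rpower d r <= J' / Rpower d' r.
Proof.
  intros Hr HJ Hd; pose proof (Rpower_pos d' r); pose proof (Rpower_pos d r).
  assert (Rpower d' r <= Rpower d r) by (apply Rle_Rpower_l; lra).
  unfold Rdiv; apply Rmult_le_compat; try lra.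
  - left; apply Rinv_0_lt_compat; lra.
  - apply Rinv_le_contravar; lra.
Qed.

Lemma INR_ge_2 n : (2 <= n)%nat -> 2 <= INR n.
Proof. intros H; apply (le_INR 2) in H; simpl in H; lra. Qed.

Definition powlog (s t x : R) : R := Rpower x s * Rpower (ln x) t.

Lemma powlog_pos s t x : 0 < powlog s t x.
Proof. apply Rmult_lt_0_compat; apply Rpower_pos. Qed.

Lemma powlog_mul s1 t1 s2 t2 x :
  powlog s1 t1 x * powlog s2 t2 x = powlog (s1 + s2) (t1 + t2) x.
Proof. unfold powlog; rewrite !Rpower_plus; ring. Qed.

Lemma powlog_pow s t x r : Rpower (powlog s t x) r = powlog (s * r) (t * r) x.
Proof.
  unfold powlog; rewrite <- Rpower_mult_distr by apply Rpower_pos.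
  now rewrite !Rpower_mult.
Qed.

Lemma powlog_inv s t x : / powlog s t x = powlog (- s) (- t) x.
Proof. unfold powlog; now rewrite !Rpower_Ropp, Rinv_mult. Qed.

Lemma powlog_mul_ln s t x : 1 < x -> powlog s (t - 1) x * ln x = powlog s t x.
Proof.
  intros Hx; unfold powlog.
  replace t with ((t - 1) + 1) at 2 by ring.
  rewrite Rpower_plus, (Rpower_1 (ln x)) by (apply ln_gt_0; lra); ring.
Qed.

Lemma powlog_mul_id s t x : 0 < x -> x * powlog s t x = powlog (s + 1) t x.
Proof. intros Hx; unfold powlog; rewrite Rpower_plus, Rpower_1 by lra; ring. Qed.

Lemma powlog_le_succ_ln s t x : 3 <= x -> powlog s (t - 1) x <= powlog s t x.
Proof.
  intros Hx; rewrite <- (powlog_mul_ln s t x) by lra.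
  pose proof (ln_ge_1 x Hx); pose proof (powlog_pos s (t - 1) x); nra.
Qed.

Lemma powlog_le_ratio s t k x y : 1 < x -> 1 < y ->
  y <= k * x -> x <= k * y -> ln y <= k * ln x -> ln x <= k * ln y ->
  powlog s t y <= Rpower k (Rabs s + Rabs t) * powlog s t x.
Proof.
  intros Hx Hy H1 H2 H3 H4.
  assert (Lx : 0 < ln x) by (apply ln_gt_0; lra).
  assert (Ly : 0 < ln y) by (apply ln_gt_0; lra).
  pose proof (Rpower_le_ratio y x k s ltac:(lra) ltac:(lra) H1 H2).
  pose proof (Rpower_le_ratio (ln y) (ln x) k t Ly Lx H3 H4).
  unfold powlog; rewrite Rpower_plus.
  replace (Rpower k (Rabs s) * Rpower k (Rabs t) * (Rpower x s * Rpower (ln x) t))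
    with ((Rpower k (Rabs s) * Rpower x s) * (Rpower k (Rabs t) * Rpower (ln x) t)) by ring.
  apply Rmult_le_compat; auto; left; apply Rpower_pos.
Qed.

Lemma powlog_le_neighbour s t x y : 2 <= x -> 2 <= y -> y <= x + 1 -> x <= y + 1 ->
  powlog s t y <= Rpower 2 (Rabs s + Rabs t) * powlog s t x.
Proof.
  intros Hx Hy H1 H2; apply powlog_le_ratio; try lra;
    apply (ln_le_mul_ln _ _ _ 2); simpl; nra.
Qed.

Lemma powlog_le_mono s t x y : 0 <= s -> 0 <= t -> 3 <= x -> x <= y ->
  powlog s t x <= powlog s t y.
Proof.
  intros Hs Ht Hx Hxy; pose proof (ln_ge_1 x Hx).
  assert (ln x <= ln y) by (apply ln_le; lra).
  apply Rmult_le_compat; try (left; apply Rpower_pos); apply Rle_Rpower_l; lra.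
Qed.

Lemma powlog_derive s t x : 1 < x ->
  derivable_pt_lim (powlog s t) x (powlog (s - 1) (t - 1) x * (s * ln x + t)).
Proof.
  intros Hx; unfold powlog.
  assert (Lx : 0 < ln x) by (apply ln_gt_0; lra).
  replace (Rpower x (s - 1) * Rpower (ln x) (t - 1) * (s * ln x + t)) with
    (s * Rpower x (s - 1) * Rpower (ln x) t + Rpower x s * (t * Rpower (ln x) (t - 1) * / x)).
  - apply (derivable_pt_lim_mult (fun x => Rpower x s) (fun x => Rpower (ln x) t)).
    + apply derivable_pt_lim_power; lra.
    + apply (derivable_pt_lim_comp ln (fun y => Rpower y t)).
      * apply derivable_pt_lim_ln; lra.
      * apply derivable_pt_lim_power; lra.
  - assert (Es : Rpower x s = Rpower x (s - 1) * x).
    { replace s with ((s - 1) + 1) at 1 by ring; rewrite Rpower_plus, Rpower_1; lra. }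
    assert (Et : Rpower (ln x) t = Rpower (ln x) (t - 1) * ln x).
    { replace t with ((t - 1) + 1) at 1 by ring; rewrite Rpower_plus, Rpower_1; lra. }
    rewrite Es, Et; field; lra.
Qed.

Lemma powlog_MVT s t a : 2 <= a -> exists xi, a < xi < a + 1 /\
  powlog s t (a + 1) - powlog s t a = powlog (s - 1) (t - 1) xi * (s * ln xi + t).
Proof.
  intros Ha.
  destruct (MVT_cor2 (powlog s t) (fun x => powlog (s - 1) (t - 1) x * (s * ln x + t))
              a (a + 1)) as [xi [E Hxi]]; [lra | intros; apply powlog_derive; lra |].
  exists xi; split; [lra | rewrite E; ring].
Qed.

Lemma powlog_div_Rpower s t u r z :
  powlog 0 u z / Rpower (powlog (- s - 1) (- t) z) r = powlog ((s + 1) * r) (u + t * r) z.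
Proof. unfold Rdiv; rewrite powlog_pow, powlog_inv, powlog_mul; f_equal; ring. Qed.

(** * Finite sums *)

Lemma lsum_ext {A} (f g : A -> R) l : (forall a, In a l -> f a = g a) -> lsum f l = lsum g l.
Proof. induction l as [|a l IH]; simpl; intros H; auto; rewrite H, IH; auto. Qed.

Lemma lsum_le {A} (f g : A -> R) l : (forall a, In a l -> f a <= g a) -> lsum f l <= lsum g l.
Proof. induction l as [|a l IH]; simpl; intros H; [lra | apply Rplus_le_compat; auto]. Qed.

Lemma lsum_nonneg {A} (f : A -> R) l : (forall a, In a l -> 0 <= f a) -> 0 <= lsum f l.
Proof.
  induction l as [|a l IH]; simpl; intros H; [lra|].
  pose proof (H a (or_introl eq_refl)); pose proof (IH (fun b Hb => H b (or_intror Hb))); lra.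
Qed.

Lemma lsum_const {A} (v : R) (l : list A) : lsum (fun _ => v) l = INR (length l) * v.
Proof.
  induction l as [|a l IH]; [simpl; ring|].
  simpl length; rewrite S_INR; simpl; rewrite IH; ring.
Qed.

Lemma lsum_app {A} (f : A -> R) l1 l2 : lsum f (l1 ++ l2) = lsum f l1 + lsum f l2.
Proof. induction l1 as [|a l IH]; simpl; [ring | rewrite IH; ring]. Qed.

Lemma lsum_map {A B} (f : B -> R) (h : A -> B) l : lsum f (map h l) = lsum (fun a => f (h a)) l.
Proof. induction l as [|a l IH]; simpl; auto; now rewrite IH. Qed.

Lemma lsum_flat_map {A B} (f : B -> R) (g : A -> list B) l :
  lsum f (flat_map g l) = lsum (fun a => lsum f (g a)) l.
Proof. induction l as [|a l IH]; simpl; auto; now rewrite lsum_app, IH. Qed.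

(* Level k sits at x_k = k + 3, where ln x_k >= 1. *)
Definition xk (k : nat) : R := INR k + 3.

Lemma xk_ge_3 k : 3 <= xk k.
Proof. unfold xk; pose proof (pos_INR k); lra. Qed.

Lemma xk_S k : xk (S k) = xk k + 1.
Proof. unfold xk; rewrite S_INR; ring. Qed.

Lemma xk_le j k : (j <= k)%nat -> xk j <= xk k.
Proof. intros H; unfold xk; apply Rplus_le_compat_r, le_INR, H. Qed.

Lemma asymp_ext f f' g g' : asymp f g ->
  (forall n, f n = f' n) -> (forall n, g n = g' n) -> asymp f' g'.
Proof.
  intros (c & C & Hc & HC & H) Ef Eg; exists c, C; split; [exact Hc | split; [exact HC |]].
  intros n Hn; rewrite <- Ef, <- Eg; exact (H n Hn).
Qed.

Section PartialSums.

Variables (f : nat -> R) (a b cf Cf : R).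
Hypotheses (Ha : 0 <= a) (Hb : 0 <= b) (Hcf : 0 < cf) (HCf : 0 < Cf)
  (Hf : forall k, cf * powlog a b (xk k) <= f k <= Cf * powlog a b (xk k)).

Lemma partial_sum_le n : (2 <= n)%nat ->
  lsum f (seq 0 (S n)) <= 2 * Cf * Rpower 3 (a + b) * powlog (a + 1) b (INR n).
Proof.
  intros Hn; pose proof (INR_ge_2 n Hn) as Hy.
  assert (Hsum : lsum f (seq 0 (S n)) <= INR (S n) * (Cf * powlog a b (xk n))).
  { rewrite <- (length_seq (S n) 0) at 2; rewrite <- lsum_const; apply lsum_le.
    intros k Hk; apply in_seq in Hk; destruct (Hf k) as [_ Hfk].
    apply (Rle_trans _ _ _ Hfk), Rmult_le_compat_l; [lra|].
    apply powlog_le_mono, xk_le; auto using xk_ge_3; lia. }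
  assert (Hshift : powlog a b (xk n) <= Rpower 3 (a + b) * powlog a b (INR n)).
  { replace (a + b) with (Rabs a + Rabs b) by (rewrite !Rabs_right; lra); unfold xk.
    apply powlog_le_ratio; try lra;
      (apply (ln_le_mul_ln _ _ _ 3); simpl; nra). }
  rewrite <- powlog_mul_id by lra; rewrite S_INR in Hsum.
  pose proof (powlog_pos a b (xk n)); pose proof (Rpower_pos 3 (a + b)).
  apply (Rle_trans _ _ _ Hsum).
  apply Rle_trans with (2 * INR n * (Cf * (Rpower 3 (a + b) * powlog a b (INR n)))); [|right; ring].
  apply Rmult_le_compat; try nra.
Qed.

Lemma partial_sum_ge n : (2 <= n)%nat ->
  cf / (2 * Rpower 2 (a + b)) * powlog (a + 1) b (INR n) <= lsum f (seq 0 (S n)).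
Proof.
  intros Hn; pose proof (INR_ge_2 n Hn) as Hy.
  set (j := (n / 2)%nat).
  assert (Hj : (2 * j <= n <= 2 * j + 1)%nat).
  { pose proof (Nat.div_mod n 2 ltac:(lia)); pose proof (Nat.mod_upper_bound n 2 ltac:(lia)).
    unfold j; lia. }
  assert (HjR : 2 * INR j <= INR n <= 2 * INR j + 1).
  { replace (2 * INR j) with (INR (2 * j)) by (rewrite mult_INR; reflexivity).
    rewrite <- S_INR; split; apply le_INR; lia. }
  assert (Htail : INR (S n - j) * (cf * powlog a b (xk j)) <= lsum f (seq j (S n - j))).
  { rewrite <- (length_seq (S n - j) j) at 1; rewrite <- lsum_const; apply lsum_le.
    intros k Hk; apply in_seq in Hk; destruct (Hf k) as [Hfk _].
    refine (Rle_trans _ _ _ _ Hfk); apply Rmult_le_compat_l; [lra|].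
    apply powlog_le_mono, xk_le; auto using xk_ge_3; lia. }
  assert (Hhead : 0 <= lsum f (seq 0 j)).
  { apply lsum_nonneg; intros k _; destruct (Hf k); pose proof (powlog_pos a b (xk k)); nra. }
  assert (Hsplit : lsum f (seq 0 (S n)) = lsum f (seq 0 j) + lsum f (seq j (S n - j))).
  { rewrite <- lsum_app; f_equal; replace (S n) with (j + (S n - j))%nat at 1 by lia.
    now rewrite seq_app. }
  assert (Hcount : INR n / 2 <= INR (S n - j)).
  { rewrite minus_INR, S_INR by lia; lra. }
  assert (Hshift : powlog a b (INR n) <= Rpower 2 (a + b) * powlog a b (xk j)).
  { replace (a + b) with (Rabs a + Rabs b) by (rewrite !Rabs_right; lra); unfold xk.
    pose proof (pos_INR j).
    apply powlog_le_ratio; try lra;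
      (apply (ln_le_mul_ln _ _ _ 2); simpl; nra). }
  rewrite <- powlog_mul_id by lra.
  pose proof (powlog_pos a b (xk j)); pose proof (Rpower_pos 2 (a + b)).
  apply Rle_trans with (INR n / 2 * (cf * powlog a b (xk j))).
  - apply Rle_trans with (cf / (2 * Rpower 2 (a + b)) *
                          (INR n * (Rpower 2 (a + b) * powlog a b (xk j)))).
    + apply Rmult_le_compat_l; [left; apply Rdiv_lt_0_compat; lra|].
      apply Rmult_le_compat_l; lra.
    + right; field; lra.
  - rewrite Hsplit.
    apply Rle_trans with (INR (S n - j) * (cf * powlog a b (xk j))); [|lra].
    apply Rmult_le_compat_r; nra.
Qed.

Lemma partial_sum_asymp :
  asymp (fun n => lsum f (seq 0 (S n))) (fun n => powlog (a + 1) b (INR n)).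
Proof.
  pose proof (Rpower_pos 2 (a + b)); pose proof (Rpower_pos 3 (a + b)).
  exists (cf / (2 * Rpower 2 (a + b))), (2 * Cf * Rpower 3 (a + b)).
  split; [apply Rdiv_lt_0_compat; lra|]; split; [repeat apply Rmult_lt_0_compat; lra|].
  intros n Hn; split; [apply partial_sum_ge | apply partial_sum_le]; exact Hn.
Qed.

End PartialSums.

(** * The balance inequality at a vertex *)

(* At a vertex x whose parent edge has weight W1 / M and whose child edges have total weight
   W2 / M, with u(parent) - u(x) = e1 and u(x) - u(child) = e2, one has
   M mu(x) u(x)^p |grad u(x)|^q = balance_lhs p q W1 W2 e1 e2 (u x) and
   -M mu(x) Delta_m u(x) = balance_rhs m W1 W2 e1 e2 (see supersol_at_of_balance). *)
Definition mean_grad (W1 W2 e1 e2 : R) : R :=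
  sqrt ((W1 * e1 ^ 2 + W2 * e2 ^ 2) / (2 * (W1 + W2))).

Definition balance_lhs (p q W1 W2 e1 e2 v : R) : R :=
  (W1 + W2) * Rpower v p * Rpower (mean_grad W1 W2 e1 e2) q.

Definition balance_rhs (m W1 W2 e1 e2 : R) : R :=
  W2 * Rpower e2 (m - 1) - W1 * Rpower e1 (m - 1).


Lemma balance_lhs_pos p q W1 W2 e1 e2 v : 0 < W1 + W2 -> 0 < balance_lhs p q W1 W2 e1 e2 v.
Proof.
  intros HW; unfold balance_lhs.
  apply Rmult_lt_0_compat; [apply Rmult_lt_0_compat|]; auto; apply Rpower_pos.
Qed.

Lemma mean_grad_pos W1 W2 e1 e2 : 0 <= W1 -> 0 < W2 -> 0 < e2 -> 0 < mean_grad W1 W2 e1 e2.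
Proof.
  intros H1 H2 He; apply sqrt_lt_R0, Rdiv_lt_0_compat; [|lra].
  pose proof (pow2_ge_0 e1); assert (0 < e2 ^ 2) by (apply pow_lt; lra); nra.
Qed.

Lemma mean_grad_bounds W1 W2 e1 e2 lo hi : 0 <= W1 -> 0 < W2 -> 0 <= lo ->
  lo <= e1 <= hi -> lo <= e2 <= hi -> lo / 2 <= mean_grad W1 W2 e1 e2 <= hi.
Proof.
  intros H1 H2 Hlo [E1 E1'] [E2 E2']; unfold mean_grad.
  assert (A1 : W1 * lo ^ 2 <= W1 * e1 ^ 2 <= W1 * hi ^ 2) by (split; apply Rmult_le_compat_l; nra).
  assert (A2 : W2 * lo ^ 2 <= W2 * e2 ^ 2 <= W2 * hi ^ 2) by (split; apply Rmult_le_compat_l; nra).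
  set (X := (W1 * e1 ^ 2 + W2 * e2 ^ 2) / (2 * (W1 + W2))).
  assert (HX : (lo / 2) ^ 2 <= X <= hi ^ 2).
  { unfold X; split; apply (Rmult_le_reg_r (2 * (W1 + W2))); try lra;
      unfold Rdiv; rewrite ?Rmult_assoc, Rinv_l by lra; nra. }
  split.
  - rewrite <- (sqrt_pow2 (lo / 2)) by lra; apply sqrt_le_1_alt; lra.
  - rewrite <- (sqrt_pow2 hi) by lra; apply sqrt_le_1_alt; lra.
Qed.

Lemma mean_grad_scale W1 W2 e1 e2 lam : 0 <= W1 -> 0 < W2 -> 0 < lam ->
  mean_grad W1 W2 (lam * e1) (lam * e2) = lam * mean_grad W1 W2 e1 e2.
Proof.
  intros H1 H2 Hl; unfold mean_grad.
  replace ((W1 * (lam * e1) ^ 2 + W2 * (lam * e2) ^ 2) / (2 * (W1 + W2)))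
    with (lam ^ 2 * ((W1 * e1 ^ 2 + W2 * e2 ^ 2) / (2 * (W1 + W2)))) by (field; lra).
  rewrite sqrt_mult_alt, sqrt_pow2 by (try apply pow2_ge_0; lra); reflexivity.
Qed.

(* Both sides of the balance are homogeneous in the scale of u: of degree p + q on the left and
   m - 1 on the right.  Since p + q > m - 1, a small multiple of a profile restores the balance. *)
Lemma balance_scale p q m lam rho W1 W2 e1 e2 v :
  0 < lam -> 0 <= W1 -> 0 < W2 -> 0 < e1 -> 0 < e2 -> 0 < v ->
  Rpower lam (p + q) = Rpower lam (m - 1) * rho ->
  rho * balance_lhs p q W1 W2 e1 e2 v <= balance_rhs m W1 W2 e1 e2 ->
  balance_lhs p q W1 W2 (lam * e1) (lam * e2) (lam * v)
    <= balance_rhs m W1 W2 (lam * e1) (lam * e2).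
Proof.
  intros Hl H1 H2 He1 He2 Hv Hrho Hbal.
  pose proof (mean_grad_pos W1 W2 e1 e2 H1 H2 He2).
  assert (Elhs : balance_lhs p q W1 W2 (lam * e1) (lam * e2) (lam * v)
                 = Rpower lam (p + q) * balance_lhs p q W1 W2 e1 e2 v).
  { unfold balance_lhs; rewrite mean_grad_scale, <- !Rpower_mult_distr, Rpower_plus by lra; ring. }
  assert (Erhs : balance_rhs m W1 W2 (lam * e1) (lam * e2)
                 = Rpower lam (m - 1) * balance_rhs m W1 W2 e1 e2).
  { unfold balance_rhs; rewrite <- !Rpower_mult_distr by lra; ring. }
  rewrite Elhs, Erhs, Hrho, Rmult_assoc.
  apply Rmult_le_compat_l; [left; apply Rpower_pos | exact Hbal].
Qed.

(** * The radial profile and the level weights *)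

Definition profile (al be : R) (k : nat) : R := powlog (- al) (- be) (xk k).

Definition drop (al be : R) (k : nat) : R := profile al be k - profile al be (S k).

Definition flux (eps : R) (k : nat) : R := powlog 0 eps (xk k).

Definition level_weight (m al be eps : R) (k : nat) : R :=
  flux eps k / Rpower (drop al be k) (m - 1).


Lemma flux_increment eps k : 0 < eps ->
  eps / Rpower 2 (1 + Rabs (eps - 1)) * powlog (- 1) (eps - 1) (xk (S k))
  <= flux eps (S k) - flux eps k.
Proof.
  intros Heps; pose proof (xk_ge_3 k).
  destruct (powlog_MVT 0 eps (xk k) ltac:(lra)) as [xi [Hxi E]].
  unfold flux; rewrite xk_S, E; replace (0 - 1) with (- 1) by ring.
  assert (Hnb : powlog (- 1) (eps - 1) (xk k + 1)
                <= Rpower 2 (1 + Rabs (eps - 1)) * powlog (- 1) (eps - 1) xi).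
  { replace (1 + Rabs (eps - 1)) with (Rabs (- 1) + Rabs (eps - 1)) by (rewrite Rabs_left; lra).
    apply powlog_le_neighbour; lra. }
  pose proof (Rpower_pos 2 (1 + Rabs (eps - 1))).
  replace (0 * ln xi + eps) with eps by ring.
  apply Rle_trans with (eps / Rpower 2 (1 + Rabs (eps - 1)) *
                        (Rpower 2 (1 + Rabs (eps - 1)) * powlog (- 1) (eps - 1) xi)).
  - apply Rmult_le_compat_l; [left; apply Rdiv_lt_0_compat|]; lra.
  - right; field; lra.
Qed.

Section Profile.

Variables al be : R.
Hypotheses (Hal : 0 < al) (Hbe : 0 < be).

Let K := Rpower 2 (al + 1 + be).

Lemma drop_bounds k z : xk k <= z <= xk (S k) ->
  al / K * powlog (- al - 1) (- be) z <= drop al be k <=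
  (al + be) * K * powlog (- al - 1) (- be) z.
Proof.
  intros Hz; pose proof (xk_ge_3 k) as H3; rewrite xk_S in Hz.
  destruct (powlog_MVT (- al) (- be) (xk k) ltac:(lra)) as [xi [Hxi E]].
  assert (Hdrop : drop al be k = al * powlog (- al - 1) (- be) xi
                                 + be * powlog (- al - 1) (- be - 1) xi).
  { unfold drop, profile; rewrite xk_S, <- (powlog_mul_ln (- al - 1) (- be) xi) by lra.
    lra. }
  assert (HK : Rabs (- al - 1) + Rabs (- be) = al + 1 + be) by (rewrite !Rabs_left; lra).
  assert (Hz_xi : powlog (- al - 1) (- be) z <= K * powlog (- al - 1) (- be) xi)
    by (unfold K; rewrite <- HK; apply powlog_le_neighbour; lra).
  assert (Hxi_z : powlog (- al - 1) (- be) xi <= K * powlog (- al - 1) (- be) z)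
    by (unfold K; rewrite <- HK; apply powlog_le_neighbour; lra).
  assert (Hln : powlog (- al - 1) (- be - 1) xi <= powlog (- al - 1) (- be) xi)
    by (apply powlog_le_succ_ln; lra).
  assert (HK0 : 0 < K) by apply Rpower_pos.
  pose proof (powlog_pos (- al - 1) (- be - 1) xi).
  rewrite Hdrop; split.
  - apply Rle_trans with (al * powlog (- al - 1) (- be) xi); [|nra].
    unfold Rdiv; rewrite Rmult_assoc; apply Rmult_le_compat_l; [lra|].
    apply (Rmult_le_reg_l K); [lra|].
    rewrite <- Rmult_assoc, Rinv_r, Rmult_1_l; lra.
  - apply Rle_trans with ((al + be) * powlog (- al - 1) (- be) xi); [nra|].
    rewrite Rmult_assoc; apply Rmult_le_compat_l; lra.
Qed.

Lemma drop_pos k : 0 < drop al be k.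
Proof.
  pose proof (xk_ge_3 k); pose proof (powlog_pos (- al - 1) (- be) (xk k)).
  assert (0 < al / K) by (apply Rdiv_lt_0_compat; [lra | apply Rpower_pos]).
  destruct (drop_bounds k (xk k)) as [Hlow _]; [rewrite xk_S; lra|].
  nra.
Qed.

Variables m eps : R.
Hypotheses (Hm : 1 < m) (Heps : 0 < eps).

Let w := level_weight m al be eps.
Let a0 := (al + 1) * (m - 1).
Let b0 := eps + be * (m - 1).

Lemma level_weight_pos k : 0 < w k.
Proof. apply Rdiv_lt_0_compat; [apply powlog_pos | apply Rpower_pos]. Qed.

Lemma level_weight_mul_drop k : w k * Rpower (drop al be k) (m - 1) = flux eps k.
Proof. unfold w, level_weight; field; apply Rgt_not_eq, Rpower_pos. Qed.

Lemma level_weight_ge k : / Rpower ((al + be) * K) (m - 1) * powlog a0 b0 (xk k) <= w k.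
Proof.
  pose proof (xk_ge_3 k); pose proof (powlog_pos (- al - 1) (- be) (xk k)).
  pose proof (powlog_pos 0 eps (xk k)); pose proof (drop_pos k).
  assert (HK : 0 < K) by apply Rpower_pos.
  destruct (drop_bounds k (xk k)) as [_ Hup]; [rewrite xk_S; lra|].
  unfold a0, b0; rewrite <- powlog_div_Rpower.
  apply Rle_trans
    with (flux eps k / Rpower ((al + be) * K * powlog (- al - 1) (- be) (xk k)) (m - 1)).
  - rewrite <- (Rpower_mult_distr ((al + be) * K)) by nra; unfold flux; right; field.
    split; apply Rgt_not_eq, Rpower_pos.
  - apply Rdiv_Rpower_le; unfold flux; lra.
Qed.

Lemma level_weight_le k z : xk k <= z <= xk (S k) ->
  w k <= / Rpower (al / K) (m - 1) * powlog a0 b0 z.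
Proof.
  intros Hz; pose proof (xk_ge_3 k); pose proof (powlog_pos (- al - 1) (- be) z).
  pose proof (powlog_pos 0 eps (xk k)).
  assert (HK : 0 < al / K) by (apply Rdiv_lt_0_compat; [lra | apply Rpower_pos]).
  destruct (drop_bounds k z Hz) as [Hlow _].
  assert (Hflux : flux eps k <= powlog 0 eps z) by (apply powlog_le_mono; lra).
  unfold a0, b0; rewrite <- powlog_div_Rpower.
  apply Rle_trans with (powlog 0 eps z / Rpower (al / K * powlog (- al - 1) (- be) z) (m - 1)).
  - apply Rdiv_Rpower_le; unfold flux in *; nra.
  - rewrite <- (Rpower_mult_distr (al / K)) by nra; right; field.
    split; apply Rgt_not_eq, Rpower_pos.
Qed.

Lemma level_weight_partial_sum_asymp :
  asymp (fun n => lsum w (seq 0 (S n))) (fun n => powlog (a0 + 1) b0 (INR n)).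
Proof.
  apply partial_sum_asymp with (/ Rpower ((al + be) * K) (m - 1)) (/ Rpower (al / K) (m - 1));
    try (unfold a0, b0; nra); try (apply Rinv_0_lt_compat, Rpower_pos).
  intros k; split; [apply level_weight_ge | apply level_weight_le; rewrite xk_S; lra].
Qed.

Lemma Rpower_mean_grad_le k r :
  Rpower (mean_grad (w k) (w (S k)) (drop al be k) (drop al be (S k))) r
  <= (Rpower (al / K / 2) r + Rpower ((al + be) * K) r)
     * powlog ((- al - 1) * r) (- be * r) (xk (S k)).
Proof.
  set (P := powlog (- al - 1) (- be) (xk (S k))).
  assert (HP : 0 < P) by apply powlog_pos.
  assert (Hc : 0 < al / K) by (apply Rdiv_lt_0_compat; [lra | apply Rpower_pos]).
  assert (HC : 0 < (al + be) * K) by (apply Rmult_lt_0_compat; [lra | apply Rpower_pos]).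
  assert (HG : al / K * P / 2 <= mean_grad (w k) (w (S k)) (drop al be k) (drop al be (S k))
               <= (al + be) * K * P).
  { pose proof (xk_S k); pose proof (xk_S (S k)).
    pose proof (level_weight_pos k); pose proof (level_weight_pos (S k)).
    apply mean_grad_bounds; try apply drop_bounds; lra || nra. }
  apply Rle_trans with (Rpower (al / K / 2 * P) r + Rpower ((al + be) * K * P) r).
  - apply Rpower_le_endpoints; [nra|].
    replace (al / K / 2 * P) with (al / K * P / 2) by (field; apply Rgt_not_eq, Rpower_pos); lra.
  - rewrite <- !Rpower_mult_distr by lra; unfold P; rewrite powlog_pow; lra.
Qed.

Variables p q : R.
Hypotheses (Hexp_pow : a0 - al * p - (al + 1) * q = - 1)
           (Hexp_log : b0 - be * p - be * q = eps - 1).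

Lemma level_balance_le k :
  balance_lhs p q (w k) (w (S k)) (drop al be k) (drop al be (S k)) (profile al be (S k))
  <= 2 / Rpower (al / K) (m - 1) * (Rpower (al / K / 2) q + Rpower ((al + be) * K) q)
     * powlog (- 1) (eps - 1) (xk (S k)).
Proof.
  set (x := xk (S k)).
  pose proof (Rpower_mean_grad_le k q) as HG; fold x in HG.
  assert (HW : w k + w (S k) <= 2 / Rpower (al / K) (m - 1) * powlog a0 b0 x).
  { pose proof (level_weight_le k x); pose proof (level_weight_le (S k) x).
    pose proof (xk_S k); pose proof (xk_S (S k)); unfold x in *; unfold Rdiv; lra. }
  pose proof (level_weight_pos k); pose proof (level_weight_pos (S k)).
  pose proof (Rpower_pos (mean_grad (w k) (w (S k)) (drop al be k) (drop al be (S k))) q).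
  pose proof (powlog_pos (- al * p) (- be * p) x).
  unfold balance_lhs, profile; fold x; rewrite powlog_pow.
  apply Rle_trans
    with ((2 / Rpower (al / K) (m - 1) * powlog a0 b0 x) * powlog (- al * p) (- be * p) x
          * ((Rpower (al / K / 2) q + Rpower ((al + be) * K) q)
             * powlog ((- al - 1) * q) (- be * q) x)).
  - apply Rmult_le_compat; try apply Rmult_le_compat_r; try lra.
    apply Rmult_le_pos; lra.
  - right; rewrite <- Hexp_pow, <- Hexp_log.
    replace (a0 - al * p - (al + 1) * q) with (a0 + - al * p + (- al - 1) * q) by ring.
    replace (b0 - be * p - be * q) with (b0 + - be * p + - be * q) by ring.
    rewrite <- !powlog_mul; ring.
Qed.

Lemma profile_balance : exists rho, 0 < rho /\
  rho * balance_lhs p q 0 (w 0) (drop al be 0) (drop al be 0) (profile al be 0)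
    <= balance_rhs m 0 (w 0) (drop al be 0) (drop al be 0) /\
  forall k, rho * balance_lhs p q (w k) (w (S k)) (drop al be k) (drop al be (S k))
                    (profile al be (S k))
    <= balance_rhs m (w k) (w (S k)) (drop al be k) (drop al be (S k)).
Proof.
  set (C := 2 / Rpower (al / K) (m - 1) * (Rpower (al / K / 2) q + Rpower ((al + be) * K) q)).
  set (c := eps / Rpower 2 (1 + Rabs (eps - 1))).
  set (L0 := balance_lhs p q 0 (w 0) (drop al be 0) (drop al be 0) (profile al be 0)).
  assert (HC : 0 < C).
  { pose proof (Rpower_pos (al / K) (m - 1)); pose proof (Rpower_pos (al / K / 2) q).
    pose proof (Rpower_pos ((al + be) * K) q).
    apply Rmult_lt_0_compat; [apply Rdiv_lt_0_compat|]; lra. }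
  assert (Hc : 0 < c) by (apply Rdiv_lt_0_compat; [lra | apply Rpower_pos]).
  assert (HL0 : 0 < L0) by (apply balance_lhs_pos; pose proof (level_weight_pos 0); lra).
  assert (Hflux : forall k, 0 < flux eps k) by (intros; apply powlog_pos).
  assert (Hrhs : forall k, balance_rhs m (w k) (w (S k)) (drop al be k) (drop al be (S k))
                           = flux eps (S k) - flux eps k)
    by (intros; unfold balance_rhs; rewrite !level_weight_mul_drop; ring).
  set (rho := Rmin (flux eps 0 / L0) (c / C)).
  assert (Hrho : 0 < rho) by (apply Rmin_pos; apply Rdiv_lt_0_compat; auto).
  exists rho; split; [exact Hrho | split].
  - unfold balance_rhs; rewrite level_weight_mul_drop, Rmult_0_l, Rminus_0_r.
    apply Rle_trans with (flux eps 0 / L0 * L0); [|right; field; lra].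
    apply Rmult_le_compat_r; [lra | apply Rmin_l].
  - intros k; rewrite Hrhs.
    pose proof (level_balance_le k) as Hlhs; fold C in Hlhs.
    pose proof (flux_increment eps k Heps) as Hinc; fold c in Hinc.
    pose proof (level_weight_pos k); pose proof (level_weight_pos (S k)).
    pose proof (balance_lhs_pos p q (w k) (w (S k)) (drop al be k) (drop al be (S k))
                  (profile al be (S k)) ltac:(lra)).
    apply Rle_trans with (c / C * (C * powlog (- 1) (eps - 1) (xk (S k)))).
    + apply Rmult_le_compat; try lra; apply Rmin_r.
    + apply Rle_trans with (c * powlog (- 1) (eps - 1) (xk (S k))); [right; field|]; lra.
Qed.

End Profile.

(** * Radial weights on the tree *)

Definition is_child (x y : list nat) : bool :=
  match y with
  | [] => false
  | _ :: t => if list_eq_dec Nat.eq_dec t x then true else false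
  end.

Definition radial_weight (c : nat -> R) (x y : list nat) : R :=
  if is_child x y then c (length x) else if is_child y x then c (length y) else 0.

Lemma is_child_spec x y : is_child x y = true <-> exists i, y = i :: x.
Proof.
  destruct y as [|b t]; simpl.
  - split; [discriminate | intros [i H]; discriminate].
  - destruct (list_eq_dec Nat.eq_dec t x) as [-> | Hne].
    + split; eauto.
    + split; [discriminate | intros [i H]; injection H; congruence].
Qed.

Lemma is_child_length x y : is_child x y = true -> length y = S (length x).
Proof. intros H; apply is_child_spec in H as [i ->]; reflexivity. Qed.

Lemma radial_weight_child c x i : radial_weight c x (i :: x) = c (length x).
Proof.
  unfold radial_weight; replace (is_child x (i :: x)) with true; auto.
  symmetry; apply is_child_spec; eauto.
Qed.

Lemma radial_weight_parent c a t : radial_weight c (a :: t) t = c (length t).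
Proof.
  unfold radial_weight; destruct (is_child (a :: t) t) eqn:E.
  - apply is_child_length in E; simpl in E; lia.
  - replace (is_child t (a :: t)) with true; auto.
    symmetry; apply is_child_spec; eauto.
Qed.

Lemma radial_weight_is_weight N c : (forall k, 0 < c k) -> is_weight N (radial_weight c).
Proof.
  intros Hc x y Hx Hy; unfold radial_weight, adj.
  destruct (is_child x y) eqn:Exy, (is_child y x) eqn:Eyx.
  - apply is_child_length in Exy; apply is_child_length in Eyx; lia.
  - pose proof (Hc (length x)); apply is_child_spec in Exy; repeat split; auto; lra.
  - pose proof (Hc (length y)); apply is_child_spec in Eyx; repeat split; auto; lra.
  - repeat split; try lra.
    intros (_ & _ & [H | H]); apply is_child_spec in H; congruence.
Qed.

Lemma lsum_nbrs_root N c F (h : list nat -> R) :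
  (forall y, h y = radial_weight c [] y * F (length y)) ->
  lsum h (nbrs N []) = INR N * (c 0%nat * F 1%nat).
Proof.
  intros Hh; unfold nbrs, children, nchild; rewrite lsum_map.
  rewrite (lsum_ext _ (fun _ => c 0%nat * F 1%nat)).
  - now rewrite lsum_const, length_seq.
  - intros i _; now rewrite Hh, radial_weight_child.
Qed.

Lemma lsum_nbrs_node N c F (h : list nat -> R) a t :
  (forall y, h y = radial_weight c (a :: t) y * F (length y)) ->
  lsum h (nbrs N (a :: t)) =
    c (length t) * F (length t) + INR (N - 1) * (c (S (length t)) * F (S (S (length t)))).
Proof.
  intros Hh; unfold nbrs, children, nchild; simpl lsum.
  rewrite Hh, radial_weight_parent, lsum_map; f_equal.
  rewrite (lsum_ext _ (fun _ => c (S (length t)) * F (S (S (length t))))).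
  - now rewrite lsum_const, length_seq.
  - intros i _; now rewrite Hh, radial_weight_child.
Qed.

Definition sphere (N k : nat) : list (list nat) := filter (validb N) (words N k).

Lemma words_length N k w : In w (words N k) -> length w = k.
Proof.
  revert w; induction k as [|k IH]; simpl; intros w Hw.
  - now destruct Hw as [<- | []].
  - apply in_flat_map in Hw as [v [Hv Hw]]; apply in_map_iff in Hw as [i [<- _]].
    simpl; now rewrite IH.
Qed.

Lemma length_filter_ltb_seq M K : (M <= K)%nat ->
  length (filter (fun i => Nat.ltb i M) (seq 0 K)) = M.
Proof.
  induction K as [|K IH]; intros H; [simpl; lia|].
  rewrite seq_S, filter_app, length_app; simpl.
  destruct (Nat.eq_dec M (S K)) as [-> | HM].
  - rewrite (proj2 (Nat.ltb_lt K (S K))) by lia; simpl.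
    rewrite (filter_ext_in _ (fun _ => true)), filter_true, length_seq; [lia|].
    intros i Hi; apply in_seq in Hi; apply Nat.ltb_lt; lia.
  - rewrite (proj2 (Nat.ltb_ge K M)), IH by lia; simpl; lia.
Qed.

Lemma length_sphere_1 N : length (sphere N 1) = N.
Proof.
  unfold sphere; simpl; rewrite app_nil_r.
  rewrite (filter_ext_in _ (fun _ => true)), filter_true, length_map, length_seq; auto.
  intros w Hw; apply in_map_iff in Hw as [i [<- Hi]]; apply in_seq in Hi.
  simpl; apply Nat.ltb_lt; lia.
Qed.

(* A nonempty reduced word of length k has exactly N - 1 admissible new first letters. *)
Lemma length_filter_extend N (l : list (list nat)) : (1 <= N)%nat ->
  (forall w, In w l -> w <> []) ->
  length (filter (validb N) (flat_map (fun w => map (fun i => i :: w) (seq 0 N)) l))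
  = ((N - 1) * length (filter (validb N) l))%nat.
Proof.
  intros HN Hne; induction l as [|w l IH]; [simpl; lia|].
  simpl flat_map; rewrite filter_app, length_app, IH by (intros; apply Hne; simpl; auto).
  rewrite filter_map_swap, length_map.
  destruct w as [|b t]; [exfalso; apply (Hne []); simpl; auto|].
  assert (Hext : forall i, validb N (i :: b :: t) = Nat.ltb i (N - 1) && validb N (b :: t))
    by reflexivity.
  change (filter (validb N) ((b :: t) :: l)) with
    (if validb N (b :: t) then (b :: t) :: filter (validb N) l else filter (validb N) l).
  destruct (validb N (b :: t)) eqn:E.
  - rewrite (filter_ext (fun i => validb N (i :: b :: t)) (fun i => Nat.ltb i (N - 1)))
      by (intros i; now rewrite Hext, andb_true_r).
    rewrite length_filter_ltb_seq by lia; simpl length; lia.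
  - rewrite (filter_ext (fun i => validb N (i :: b :: t)) (fun _ => false))
      by (intros i; now rewrite Hext, andb_false_r).
    rewrite filter_false; simpl; lia.
Qed.

Lemma length_sphere_S N k : (1 <= N)%nat -> (1 <= k)%nat ->
  length (sphere N (S k)) = ((N - 1) * length (sphere N k))%nat.
Proof.
  intros HN Hk; apply length_filter_extend; auto.
  intros w Hw ->; apply words_length in Hw; simpl in Hw; lia.
Qed.

Lemma sphere_edge_count N k x : (1 <= N)%nat -> length x = k ->
  INR (length (sphere N k)) * INR (nchild N x) = INR N * (INR N - 1) ^ k.
Proof.
  intros HN Hx; assert (EN : INR (N - 1) = INR N - 1) by (rewrite minus_INR by lia; simpl; ring).
  destruct k as [|k]; [destruct x; simpl in *; [ring | lia]|].
  replace (nchild N x) with (N - 1)%nat by (destruct x; simpl in *; [lia | reflexivity]).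
  clear x Hx; induction k as [|k IH].
  - rewrite length_sphere_1, EN; simpl; ring.
  - rewrite length_sphere_S, mult_INR, EN by lia; rewrite EN in IH.
    replace ((INR N - 1) * INR (length (sphere N (S k))) * (INR N - 1))
      with ((INR N - 1) * (INR (length (sphere N (S k))) * (INR N - 1))) by ring.
    rewrite IH; simpl; ring.
Qed.

Lemma lsum_outgoing N c x :
  lsum (fun y => if Nat.ltb (dist_o x) (dist_o y) then radial_weight c x y else 0) (nbrs N x)
  = INR (nchild N x) * c (length x).
Proof.
  set (F k := if Nat.ltb (length x) k then 1 else 0).
  assert (Hh : forall y, (if Nat.ltb (dist_o x) (dist_o y) then radial_weight c x y else 0)
                         = radial_weight c x y * F (length y)).
  { intros y; unfold F, dist_o; destruct (Nat.ltb _ _); ring. }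
  destruct x as [|a t].
  - rewrite (lsum_nbrs_root N c F _ Hh); unfold F; simpl; ring.
  - rewrite (lsum_nbrs_node N c F _ a t Hh); unfold F; simpl length.
    rewrite (proj2 (Nat.ltb_ge (S (length t)) (length t))),
            (proj2 (Nat.ltb_lt (S (length t)) (S (S (length t))))) by lia.
    simpl; ring.
Qed.

Lemma nchild_length N x y : length x = length y -> nchild N x = nchild N y.
Proof. destruct x, y; simpl; congruence. Qed.

Lemma W_radial_weight N c n : (1 <= N)%nat ->
  W N (radial_weight c) n = lsum (fun k => INR N * (INR N - 1) ^ k * c k) (seq 0 (S n)).
Proof.
  intros HN; unfold W, ball; rewrite lsum_flat_map; apply lsum_ext; intros k _.
  rewrite (lsum_ext _ (fun _ => INR (nchild N (repeat 0%nat k)) * c k)).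
  - rewrite lsum_const, <- (sphere_edge_count N k (repeat 0%nat k)), Rmult_assoc;
      auto using repeat_length.
  - intros x Hx; apply filter_In in Hx as [Hx _]; apply words_length in Hx.
    rewrite lsum_outgoing, Hx; do 2 f_equal.
    apply nchild_length; now rewrite repeat_length.
Qed.

(* The total weight w k between levels k and k+1 spread evenly over its N (N-1)^k edges. *)
Definition spread (N : nat) (w : nat -> R) (k : nat) : R := w k / (INR N * (INR N - 1) ^ k).

Lemma spread_pos N w k : (2 <= N)%nat -> 0 < w k -> 0 < spread N w k.
Proof.
  intros HN Hw; pose proof (INR_ge_2 N HN).
  apply Rdiv_lt_0_compat; [| apply Rmult_lt_0_compat; [| apply pow_lt]]; lra.
Qed.

Lemma W_spread N w n : (2 <= N)%nat -> W N (radial_weight (spread N w)) n = lsum w (seq 0 (S n)).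
Proof.
  intros HN; pose proof (INR_ge_2 N HN).
  rewrite W_radial_weight by lia; apply lsum_ext; intros k _; unfold spread.
  field; split; [apply pow_nonzero |]; lra.
Qed.

(** * Radial supersolutions *)

Lemma phim_pos m t : 0 < t -> phim m t = Rpower t (m - 1).
Proof.
  intros Ht; unfold phim; destruct (Req_EM_T t 0); [lra|].
  rewrite Rabs_right by lra; replace (m - 1) with ((m - 2) + 1) by ring.
  rewrite Rpower_plus, Rpower_1 by lra; reflexivity.
Qed.

Lemma phim_neg m t : 0 < t -> phim m (- t) = - Rpower t (m - 1).
Proof.
  intros Ht; unfold phim; destruct (Req_EM_T (- t) 0); [lra|].
  rewrite Rabs_left, Ropp_involutive by lra; replace (m - 1) with ((m - 2) + 1) by ring.
  rewrite Rpower_plus, Rpower_1 by lra; ring.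
Qed.

Lemma supersol_at_of_balance N mu m p q u x M W1 W2 e1 e2 :
  0 < M -> 0 <= W1 -> 0 < W2 -> 0 < e2 ->
  muv N mu x = (W1 + W2) / M ->
  lsum (fun y => mu x y * phim m (u y - u x)) (nbrs N x) = - balance_rhs m W1 W2 e1 e2 / M ->
  gradn N mu u x = mean_grad W1 W2 e1 e2 ->
  balance_lhs p q W1 W2 e1 e2 (u x) <= balance_rhs m W1 W2 e1 e2 ->
  supersol_at N mu m p q u x.
Proof.
  intros HM HW1 HW2 He2 Emuv Esum Egrad Hbal.
  pose proof (mean_grad_pos W1 W2 e1 e2 HW1 HW2 He2) as HG.
  unfold supersol_at, mlap; rewrite Egrad, Emuv, Esum; split; [lra|].
  unfold gpow; destruct (Req_EM_T (mean_grad W1 W2 e1 e2) 0) as [E | _]; [lra|].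
  unfold balance_lhs in Hbal.
  apply (Rmult_le_reg_l ((W1 + W2) / M)); [apply Rdiv_lt_0_compat; lra|].
  replace ((W1 + W2) / M * (/ ((W1 + W2) / M) * (- balance_rhs m W1 W2 e1 e2 / M) +
             Rpower (u x) p * Rpower (mean_grad W1 W2 e1 e2) q))
    with ((balance_lhs p q W1 W2 e1 e2 (u x) - balance_rhs m W1 W2 e1 e2) / M)
    by (unfold balance_lhs; field; lra).
  rewrite Rmult_0_r; unfold Rdiv.
  pose proof (Rinv_0_lt_compat M HM); unfold balance_lhs in *; nra.
Qed.

Section RadialSupersolution.

Variables (N : nat) (w f : nat -> R) (m p q : R).
Hypotheses (HN : (2 <= N)%nat) (Hw : forall k, 0 < w k).

Let c := spread N w.
Let u (y : list nat) := f (length y).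

(* The root has no parent edge: W1 = 0, and e1 is immaterial. *)
Lemma supersol_at_root : f 1%nat < f 0%nat ->
  balance_lhs p q 0 (w 0%nat) (f 0%nat - f 1%nat) (f 0%nat - f 1%nat) (f 0%nat)
    <= balance_rhs m 0 (w 0%nat) (f 0%nat - f 1%nat) (f 0%nat - f 1%nat) ->
  supersol_at N (radial_weight c) m p q u [].
Proof.
  intros Hf Hbal; pose proof (INR_ge_2 N HN); pose proof (Hw 0%nat).
  assert (Hc : INR N * c 0%nat = w 0%nat) by (unfold c, spread; simpl; field; lra).
  assert (Emuv : muv N (radial_weight c) [] = w 0%nat).
  { unfold muv; rewrite (lsum_nbrs_root N c (fun _ => 1)) by (intros; ring); lra. }
  apply (supersol_at_of_balance _ _ _ _ _ _ _ 1 0 (w 0%nat)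
           (f 0%nat - f 1%nat) (f 0%nat - f 1%nat));
    try lra; auto.
  - rewrite (lsum_nbrs_root N c (fun k => phim m (f k - f 0%nat))) by reflexivity.
    replace (f 1%nat - f 0%nat) with (- (f 0%nat - f 1%nat)) by ring.
    rewrite phim_neg by lra; unfold balance_rhs; rewrite <- Hc; field.
  - unfold gradn, mean_grad; f_equal.
    rewrite (lsum_nbrs_root N c (fun k => / (2 * muv N (radial_weight c) []) * (f k - f 0%nat) ^ 2))
      by (intros; unfold u, Rdiv; simpl; ring).
    rewrite Emuv, <- Hc; pose proof (spread_pos N w 0 HN (Hw 0%nat)); field; nra.
Qed.

Lemma supersol_at_node a t : let l := length t in
  f (S (S l)) < f (S l) < f l ->
  balance_lhs p q (w l) (w (S l)) (f l - f (S l)) (f (S l) - f (S (S l))) (f (S l))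
    <= balance_rhs m (w l) (w (S l)) (f l - f (S l)) (f (S l) - f (S (S l))) ->
  supersol_at N (radial_weight c) m p q u (a :: t).
Proof.
  intros l Hf Hbal; pose proof (INR_ge_2 N HN); pose proof (Hw l); pose proof (Hw (S l)).
  set (M := INR N * (INR N - 1) ^ l).
  assert (HM : 0 < M) by (apply Rmult_lt_0_compat; [| apply pow_lt]; lra).
  assert (Hcl : c l = w l / M) by reflexivity.
  assert (HcS : INR (N - 1) * c (S l) = w (S l) / M).
  { unfold c, spread, M; rewrite minus_INR by lia; simpl; field.
    split; [apply pow_nonzero |]; lra. }
  assert (Emuv : muv N (radial_weight c) (a :: t) = (w l + w (S l)) / M).
  { unfold muv; rewrite (lsum_nbrs_node N c (fun _ => 1)) by (intros; ring).
    fold l; rewrite !Rmult_1_r, Hcl, HcS; field; lra. }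
  apply (supersol_at_of_balance _ _ _ _ _ _ _ M (w l) (w (S l))
           (f l - f (S l)) (f (S l) - f (S (S l)))); try lra; auto.
  - rewrite (lsum_nbrs_node N c (fun k => phim m (f k - f (S l)))) by reflexivity; fold l.
    replace (f (S (S l)) - f (S l)) with (- (f (S l) - f (S (S l)))) by ring.
    rewrite phim_pos, phim_neg by lra; unfold balance_rhs.
    rewrite Hcl, <- Rmult_assoc, HcS; field; lra.
  - unfold gradn, mean_grad; f_equal.
    rewrite (lsum_nbrs_node N c
               (fun k => / (2 * muv N (radial_weight c) (a :: t)) * (f k - f (S l)) ^ 2))
      by (intros; unfold u, Rdiv; simpl; fold l; ring).
    fold l; rewrite Emuv, <- (Rmult_assoc (INR (N - 1))), HcS, Hcl; field; lra.
Qed.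

End RadialSupersolution.

Section Construction.

Variables (N : nat) (m p q eps al be : R).
Hypotheses (HN : (2 <= N)%nat) (Hm : 1 < m) (Hpq : m - 1 < p + q) (Heps : 0 < eps)
  (Hal : 0 < al) (Hbe : 0 < be)
  (Hexp_pow : (al + 1) * (m - 1) - al * p - (al + 1) * q = - 1)
  (Hexp_log : eps + be * (m - 1) - be * p - be * q = eps - 1).

Let w := level_weight m al be eps.
Let mu := radial_weight (spread N w).

Lemma W_level_weight_asymp :
  asymp (W N mu) (fun n => powlog ((al + 1) * (m - 1) + 1) (eps + be * (m - 1)) (INR n)).
Proof.
  apply (asymp_ext _ _ _ _ (level_weight_partial_sum_asymp al be Hal Hbe m eps Hm Heps));
    [|reflexivity].
  intros n; symmetry; apply W_spread, HN.
Qed.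

Lemma scaled_profile_balance : exists lam, 0 < lam /\
  balance_lhs p q 0 (w 0%nat) (lam * drop al be 0) (lam * drop al be 0) (lam * profile al be 0)
    <= balance_rhs m 0 (w 0%nat) (lam * drop al be 0) (lam * drop al be 0) /\
  forall k, balance_lhs p q (w k) (w (S k)) (lam * drop al be k) (lam * drop al be (S k))
              (lam * profile al be (S k))
    <= balance_rhs m (w k) (w (S k)) (lam * drop al be k) (lam * drop al be (S k)).
Proof.
  destruct (profile_balance al be Hal Hbe m eps Hm Heps p q Hexp_pow Hexp_log)
    as (rho & Hrho & Hroot & Hnode).
  set (lam := Rpower rho (/ (p + q - m + 1))).
  assert (Hlam : Rpower lam (p + q) = Rpower lam (m - 1) * rho).
  { unfold lam; rewrite !Rpower_mult.
    rewrite <- (Rpower_1 rho) at 3 by exact Hrho; rewrite <- Rpower_plus.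
    f_equal; field; lra. }
  assert (Hw : forall k, 0 < w k) by (intros; apply level_weight_pos; lra).
  exists lam; split; [apply Rpower_pos | split; [| intros k]];
    apply balance_scale with rho; auto; try apply Rpower_pos; try apply powlog_pos;
    try (apply drop_pos; lra); try lra; left; apply Hw.
Qed.

Lemma scaled_profile_supersolution : exists u, nontrivial_pos_solution N mu m p q u.
Proof.
  destruct scaled_profile_balance as (lam & Hlam & Hroot & Hnode).
  assert (Hw : forall k, 0 < w k) by (intros; apply level_weight_pos; lra).
  assert (Hdrop : forall k, 0 < lam * drop al be k)
    by (intros; apply Rmult_lt_0_compat; [| apply drop_pos]; lra).
  assert (Hstep : forall k, lam * profile al be k - lam * profile al be (S k) = lam * drop al be k)
    by (intros; unfold drop; ring).
  exists (fun y => lam * profile al be (length y)); split; [|split].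
  - intros x _; apply Rmult_lt_0_compat; [exact Hlam | apply powlog_pos].
  - exists [], [0%nat]; split; [reflexivity | split; [apply Nat.ltb_lt; lia |]].
    simpl; specialize (Hstep 0%nat); specialize (Hdrop 0%nat); lra.
  - intros [|a t] _.
    + apply (supersol_at_root N w (fun k => lam * profile al be k)); auto.
      * specialize (Hstep 0%nat); specialize (Hdrop 0%nat); lra.
      * rewrite Hstep; exact Hroot.
    + apply (supersol_at_node N w (fun k => lam * profile al be k)); auto.
      * pose proof (Hstep (length t)); pose proof (Hstep (S (length t))).
        pose proof (Hdrop (length t)); pose proof (Hdrop (S (length t))); lra.
      * rewrite !Hstep; apply Hnode.
Qed.

End Construction.

Theorem mainTheorem8 (N : nat) (HN : (2 <= N)%nat) (m p q : R)
  (Hm : 1 < m) (Hp : 0 <= p) (Hq1 : m - 1 - p < q) (Hq2 : q < m)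
  (eps : R) (Heps : 0 < eps) :
  exists mu : list nat -> list nat -> R,
    is_weight N mu /\
    asymp (W N mu)
      (fun n => Rpower (INR n) ((m * p + q) / (p + q - m + 1)) *
                Rpower (ln (INR n)) ((m - 1) / (p + q - m + 1) + eps)) /\
    exists u : list nat -> R, nontrivial_pos_solution N mu m p q u.
Proof.
  set (D := p + q - m + 1); assert (HD : 0 < D) by (unfold D; lra).
  set (al := (m - q) / D); set (be := / D).
  assert (Hal : 0 < al) by (apply Rdiv_lt_0_compat; lra).
  assert (Hbe : 0 < be) by (apply Rinv_0_lt_compat; lra).
  assert (Hexp_pow : (al + 1) * (m - 1) - al * p - (al + 1) * q = - 1)
    by (unfold al, D; field; lra).
  assert (Hexp_log : eps + be * (m - 1) - be * p - be * q = eps - 1)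
    by (unfold be, D; field; lra).
  exists (radial_weight (spread N (level_weight m al be eps))); split; [|split].
  - apply radial_weight_is_weight; intros k; apply spread_pos, level_weight_pos; auto.
  - apply (asymp_ext _ _ _ _ (W_level_weight_asymp N m eps al be HN Hm Heps Hal Hbe));
      [reflexivity |].
    intros n; unfold powlog; f_equal; f_equal; unfold al, be, D; field; lra.
  - apply scaled_profile_supersolution; auto; lra.
Qed.
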